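(* Let $X,Y$ be real Hilbert spaces, let $A\in\mathcal{L}(X,Y)$ be a compact operator with singular system $\{(\sigma_i,u_i,v_i)\}_i$, and let $\alpha>0$. Let $B_\alpha=\sum_i\beta_i^\alpha v_iu_i^*$ with $\beta_i^\alpha=\frac{\sigma_i}{2}+\sqrt{\frac{\sigma_i^2}{4}-\alpha}$ if $\sigma_i\ge 2\sqrt\alpha$ and $\beta_i^\alpha=\sqrt\alpha$ if $\sigma_i<2\sqrt\alpha$, and define $K_\alpha:Y\to X$ by $$K_\alpha(y)=x(B_\alpha,y)=(B_\alpha^*B_\alpha+\alpha I)^{-1}B_\alpha^*y .$$ Then $K_\alpha(y)=\sum_i \frac{F_\alpha(\sigma_i)}{\sigma_i}\langle y,v_i\rangle\,u_i$ for all $y\in Y$, where $$F_\alpha(\sigma)=\begin{cases}1, & \sigma\ge 2\sqrt\alpha,\\ \frac{\sigma}{2\sqrt\alpha}, & \sigma<2\sqrt\alpha,\end{cases}$$ and $(K_\alpha)_{\alpha>0}$ is an order optimal regularization method with filter $F_\alpha$: for every $\nu>0$ there exist constants $\gamma,c_1,c_2,c_3>0$ (independent of $\alpha$) such that for all $\alpha>0$: (1) $\sup_{\sigma>0}|F_\alpha(\sigma)\sigma^{-1}|\le c_1\alpha^{-\gamma}$; (2) $\sup_{\sigma>0}|1-F_\alpha(\sigma)|\sigma^{\nu}<c_2\alpha^{\gamma\nu}$; (3) $|F_\alpha(\sigma)|\le c_3$ for all $\sigma>0$.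
   Context: A singular system of the compact operator $A$ means: $\sigma_i>0$, $\{u_i\}$ orthonormal in $X$, $\{v_i\}$ orthonormal in $Y$, $Au_i=\sigma_i v_i$, $A^*v_i=\sigma_i u_i$, $A=\sum_i\sigma_iv_iu_i^*$. For $v\in Y,u\in X$, $vu^*$ denotes the map $x\mapsto\langle u,x\rangle v$. $x(B,y)$ is the unique minimizer of $\tfrac12\|Bx-y\|^2+\tfrac\alpha2\|x\|^2$. The conditions (1)–(3) are the paper's (standard filter-based) definition of an order optimal regularization filter for source exponent $\nu$. *)

From HB Require Import structures.
From mathcomp Require Import all_boot all_order all_algebra finmap.
From mathcomp Require Import all_classical all_reals all_analysis.
Set Implicit Arguments. Unset Strict Implicit. Unset Printing Implicit Defensive.
Import Order.TTheory GRing.Theory Num.Theory.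
Import numFieldNormedType.Exports.
Local Open Scope classical_set_scope.
Local Open Scope ring_scope.

(* A real inner product on a normed space V whose induced norm is the norm
   of V.  A real Hilbert space is a complete normed space (completeNormedModType)
   equipped with such an inner product. *)
Definition inner_product {R : realType} {V : normedModType R}
    (ip : V -> V -> R) : Prop :=
  [/\ (forall x y, ip x y = ip y x),
      (forall a x y z, ip (a *: x + y) z = a * ip x z + ip y z)
    & (forall x, ip x x = `|x| ^+ 2)].

(* Unconditional convergence of a family indexed by an arbitrary (choice)
   type I: the net of finite partial sums converges to s. *)
Definition has_usum {R : realType} {V : normedModType R} {I : choiceType}
    (f : I -> V) (s : V) : Prop :=
  forall e : R, 0 < e -> exists A : {fset I},
    forall F : {fset I}, fsubset A F -> `|s - \sum_(i <- F) f i| < e.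

Definition orthonormal {R : realType} {V : normedModType R} {I : choiceType}
    (ip : V -> V -> R) (w : I -> V) : Prop :=
  forall i j, ip (w i) (w j) = if i == j then 1 else 0.

Definition compact_op {R : realType} {X Y : normedModType R} (A : X -> Y) : Prop :=
  compact (closure [set A x | x in ball (0 : X) 1]).

(* A^* v_i = sigma_i u_i is written via the defining identity of the adjoint:
   <A^* v_i, x> = <v_i, A x>.  A = sum_i sigma_i v_i (u_i)^* is read pointwise
   (unconditional convergence for every x), where the rank-one map v u^T applied to x is <u, x> v. *)
Definition singular_system {R : realType} {X Y : normedModType R} {I : choiceType}
    (ipX : X -> X -> R) (ipY : Y -> Y -> R) (A : X -> Y)
    (sigma : I -> R) (u : I -> X) (v : I -> Y) : Prop :=
  [/\ (forall i, 0 < sigma i),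
      orthonormal ipX u /\ orthonormal ipY v,
      (forall i, A (u i) = sigma i *: v i),
      (forall i x, ipY (v i) (A x) = sigma i * ipX (u i) x)
    & (forall x, has_usum (fun i => (sigma i * ipX (u i) x) *: v i) (A x))].

Definition beta_coef {R : realType} (alpha s : R) : R :=
  if 2 * Num.sqrt alpha <= s then s / 2 + Num.sqrt (s ^+ 2 / 4 - alpha)
  else Num.sqrt alpha.

Definition filterF {R : realType} (alpha s : R) : R :=
  if 2 * Num.sqrt alpha <= s then 1 else s / (2 * Num.sqrt alpha).

Definition tikhonov {R : realType} {X Y : normedModType R}
    (B : X -> Y) (alpha : R) (y : Y) (x : X) : R :=
  2^-1 * `|B x - y| ^+ 2 + alpha / 2 * `|x| ^+ 2.

(* x is the unique minimizer of the Tikhonov functional, i.e. x = x(B, y). *)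
Definition is_tikhonov_solution {R : realType} {X Y : normedModType R}
    (B : X -> Y) (alpha : R) (y : Y) (x : X) : Prop :=
  (forall z, tikhonov B alpha y x <= tikhonov B alpha y z) /\
  (forall z, (forall w, tikhonov B alpha y z <= tikhonov B alpha y w) -> z = x).

(* On the singular basis everything is diagonal.  B x = sum_i beta_i <u_i, x> v_i
   is additive, and the candidate x0 = sum_i F(sigma_i)/sigma_i <y, v_i> u_i
   exists by Bessel's inequality since 0 <= F(sigma)/sigma <= 1/(2 sqrt alpha).
   Termwise F(sigma)/sigma = beta/(beta^2 + alpha), which is exactly the normal
   equation <B x0 - y, B w> + alpha <x0, w> = 0 for all w; for an additive B
   that equation gives
     J(x0 + d) = J(x0) + |B d|^2 / 2 + alpha |d|^2 / 2
   for the Tikhonov functional J, so x0 is its unique minimiser.  Order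
   optimality holds with gamma = 1/2, c1 = 1/2, c2 = 2^(nu+1), c3 = 1, because
   0 <= F <= 1 and 1 - F vanishes for sigma >= 2 sqrt alpha. *)

From Pilot Require Import Defs.
From HB Require Import structures.
From mathcomp Require Import all_boot all_order all_algebra finmap.
From mathcomp Require Import all_classical all_reals all_analysis.
From mathcomp Require Import lra ring.
From mathcomp Require summability.
Import Order.TTheory GRing.Theory Num.Theory.
Import numFieldNormedType.Exports.
Set Implicit Arguments.
Unset Strict Implicit.
Unset Printing Implicit Defensive.
Local Open Scope classical_set_scope.
Local Open Scope ring_scope.

#[local] Existing Instance summability.totally_filter.

Lemma big_fset_inclD (T : nmodType) (J : choiceType) (A B : {fset J}) (F : J -> T) :
  fsubset A B -> \sum_(j <- B) F j = \sum_(j <- A) F j + \sum_(j <- (B `\` A)%fset) F j.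
Proof.
move=> /fsubsetP AB; rewrite (big_fsetID _ (mem A)) /=.
congr (_ + _); apply: eq_fbigl => j; rewrite !inE /=.
  exact: andb_idl (@AB j).
by rewrite andbC.
Qed.

Section UnconditionalSum.
Variables (R : realType) (I : choiceType) (V : normedModType R).
Implicit Types (f g : I -> V) (s t : V).

Lemma eq_has_usum f g s : f =1 g -> has_usum f s -> has_usum g s.
Proof. by move=> /funext ->. Qed.

Lemma has_usum_unique f s t : has_usum f s -> has_usum f t -> s = t.
Proof.
move=> fs ft; apply/eqP/negPn/negP => st.
have e0 : 0 < `|s - t| / 2 by rewrite divr_gt0 // normr_gt0 subr_eq0.
have [A As] := fs _ e0; have [B Bt] := ft _ e0.
have := As _ (fsubsetUl A B); have := Bt _ (fsubsetUr A B).
set S := \sum_(i <- _) _ => tS sS.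
have : `|s - t| <= `|s - S| + `|t - S|.
  by rewrite (distrC t); apply: le_trans (ler_normD _ _); rewrite addrA subrK.
lra.
Qed.

Lemma has_usumD f g s t :
  has_usum f s -> has_usum g t -> has_usum (fun i => f i + g i) (s + t).
Proof.
move=> fs gt e e0; have e2 : 0 < e / 2 by rewrite divr_gt0.
have [A As] := fs _ e2; have [B Bt] := gt _ e2.
exists (A `|` B)%fset => F; rewrite fsubUset big_split /= => /andP[AF BF].
rewrite opprD addrACA; apply: le_lt_trans (ler_normD _ _) _.
by have := As _ AF; have := Bt _ BF; lra.
Qed.

Lemma has_usum0 : has_usum (fun _ : I => 0 : V) 0.
Proof. by move=> e e0; exists fset0 => F _; rewrite big1 // subrr normr0. Qed.

Lemma has_usum_delta (i0 : I) (c : V) :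
  has_usum (fun i => if i == i0 then c else 0) c.
Proof.
move=> e e0; exists [fset i0]%fset => F i0F.
rewrite -(big_fset_incl _ i0F) ?big_seq_fset1 ?eqxx ?subrr ?normr0 //.
by move=> i _; rewrite inE => /negbTE ->.
Qed.

Lemma has_usum_cauchy (W : completeNormedModType R) (f : I -> W) :
  (forall e, 0 < e -> exists A : {fset I}, forall F, fsubset A F ->
     `|\sum_(i <- F) f i - \sum_(i <- A) f i| < e) ->
  exists x, has_usum f x.
Proof.
move=> fC; pose S (F : {fset I}) := \sum_(i <- F) f i.
have Scvg : cvg (S @ summability.totally).
  apply/cauchy_cvgP; apply: cauchy_exP => e e0.
  have [A HA] := fC e e0; exists (S A), A => // F /= AF.
  by rewrite -ball_normE /ball_ /= distrC; apply: HA.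
exists (lim (S @ summability.totally)) => e e0.
by have [A _ HA] := (cvgrPdist_lt _ _).1 Scvg e e0; exists A => F AF; apply: HA.
Qed.

End UnconditionalSum.

Section InnerProduct.
Variables (R : realType) (V : normedModType R) (ip : V -> V -> R).
Hypothesis ip_inner : inner_product ip.

Lemma ipC x y : ip x y = ip y x.
Proof. by case: ip_inner. Qed.

Lemma ipxx x : ip x x = `|x| ^+ 2.
Proof. by case: ip_inner. Qed.

Lemma ipDl x y z : ip (x + y) z = ip x z + ip y z.
Proof. by case: ip_inner => _ ipL _; rewrite -[x in LHS]scale1r ipL mul1r. Qed.

Lemma ip0l z : ip 0 z = 0.
Proof. by apply: (addrI (ip 0 z)); rewrite -ipDl !addr0. Qed.

Lemma ipZl a x z : ip (a *: x) z = a * ip x z.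
Proof. by case: ip_inner => _ ipL _; rewrite -[a *: x]addr0 ipL ip0l addr0. Qed.

Lemma ipBl x y z : ip (x - y) z = ip x z - ip y z.
Proof. by rewrite ipDl -scaleN1r ipZl mulN1r. Qed.

Lemma ipDr x y z : ip z (x + y) = ip z x + ip z y.
Proof. by rewrite !(ipC z) ipDl. Qed.

Lemma ipZr a x z : ip z (a *: x) = a * ip z x.
Proof. by rewrite !(ipC z) ipZl. Qed.

Lemma ipBr x y z : ip z (x - y) = ip z x - ip z y.
Proof. by rewrite !(ipC z) ipBl. Qed.

Lemma ip_sumr (J : Type) z (g : J -> V) (r : seq J) :
  ip z (\sum_(j <- r) g j) = \sum_(j <- r) ip z (g j).
Proof. by apply: (big_morph (ip z) (fun x y => ipDr x y z)); rewrite ipC ip0l. Qed.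

Lemma normD_sqr x y : `|x + y| ^+ 2 = `|x| ^+ 2 + 2 * ip x y + `|y| ^+ 2.
Proof. by rewrite -!ipxx ipDl !ipDr (ipC y x); ring. Qed.

Lemma ip_cauchy_schwarz x y : `|ip x y| <= `|x| * `|y|.
Proof.
have [->|x0] := eqVneq x 0; first by rewrite ip0l !normr0 mul0r.
have nx2 : 0 < `|x| ^+ 2 by rewrite exprn_gt0 // normr_gt0.
set t := ip x y / `|x| ^+ 2.
have : 0 <= `|t *: x - y| ^+ 2 by rewrite exprn_ge0.
rewrite -ipxx ipBl !ipBr !ipZl !ipZr !ipxx (ipC y x).
have -> : t * (t * `|x| ^+ 2) - t * ip x y - (t * ip x y - `|y| ^+ 2)
         = (`|x| ^+ 2 * `|y| ^+ 2 - ip x y ^+ 2) / `|x| ^+ 2.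
  by rewrite /t; field; rewrite normr_eq0.
rewrite pmulr_lge0 ?invr_gt0 // subr_ge0 -exprMn -real_normK ?num_real //.
by rewrite ler_sqr ?nnegrE ?mulr_ge0.
Qed.

Lemma has_usum_ipr (I : choiceType) z (f : I -> V) s :
  has_usum f s -> has_usum (fun i => ip z (f i)) (ip z s).
Proof.
move=> fs e e0; have z1 : 0 < `|z| + 1 by rewrite ltr_wpDl.
have [A HA] := fs _ (divr_gt0 e0 z1); exists A => F AF.
rewrite -ip_sumr -ipBr; apply: le_lt_trans (ip_cauchy_schwarz _ _) _.
have := HA _ AF; rewrite ltr_pdivlMr //; apply: le_lt_trans.
by rewrite mulrDr mulr1 mulrC lerDl.
Qed.

Section Orthonormal.
Variables (I : choiceType) (w : I -> V).
Hypothesis w_on : Defs.orthonormal ip w.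

Lemma ip_orthonormal_sumr (a : I -> R) (r : seq I) i : uniq r ->
  ip (w i) (\sum_(j <- r) a j *: w j) = if i \in r then a i else 0.
Proof.
elim: r => [|j r IH]; first by rewrite big_nil (ipC (w i)) ip0l.
rewrite cons_uniq big_cons inE => /andP[jr ur]; rewrite ipDr ipZr w_on IH //.
by case: eqVneq => [->|_]; rewrite ?(negbTE jr) ?mulr1 ?addr0 ?mulr0 ?add0r.
Qed.

Lemma norm_orthonormal_sum (a : I -> R) (r : seq I) : uniq r ->
  `|\sum_(i <- r) a i *: w i| ^+ 2 = \sum_(i <- r) a i ^+ 2.
Proof.
move=> ur; rewrite -ipxx ip_sumr big_seq [RHS]big_seq.
by apply: eq_bigr => i ir; rewrite ipZr ipC ip_orthonormal_sumr // ir expr2.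
Qed.

Lemma bessel (y : V) (r : seq I) : uniq r ->
  \sum_(i <- r) ip y (w i) ^+ 2 <= `|y| ^+ 2.
Proof.
move=> ur; set T := \sum_(i <- r) ip y (w i) *: w i.
have yT : ip y T = \sum_(i <- r) ip y (w i) ^+ 2.
  by rewrite ip_sumr; apply: eq_bigr => i _; rewrite ipZr expr2.
have : 0 <= `|y - T| ^+ 2 by rewrite exprn_ge0.
rewrite -ipxx ipBl !ipBr !ipxx (ipC T y) yT norm_orthonormal_sum //; lra.
Qed.

Lemma orthonormal_coord (a : I -> R) x :
  has_usum (fun i => a i *: w i) x -> forall i, ip (w i) x = a i.
Proof.
move=> ax i; apply: has_usum_unique (has_usum_ipr (w i) ax) _.
apply: eq_has_usum (has_usum_delta i (a i)) => j.
by rewrite ipZr w_on (eq_sym i); case: eqP => [->|_]; rewrite ?mulr1 ?mulr0.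
Qed.

End Orthonormal.
End InnerProduct.

Lemma orthonormal_has_usum (R : realType) (V : completeNormedModType R)
    (ip : V -> V -> R) (I : choiceType) (w : I -> V) (a : I -> R) (M : R) :
  inner_product ip -> Defs.orthonormal ip w ->
  (forall r, uniq r -> \sum_(i <- r) a i ^+ 2 <= M) ->
  exists x, has_usum (fun i => a i *: w i) x.
Proof.
move=> ip_inner w_on aM; apply: has_usum_cauchy => e e0.
pose E := [set \sum_(i <- F) a i ^+ 2 | F in [set: {fset I}]].
have Esup : has_sup E.
  split; first by exists (\sum_(i <- fset0) a i ^+ 2), fset0.
  by exists M => _ [F _ <-]; apply: aM.
have [_ [A _ <-] supA] := sup_adherent (exprn_gt0 2 e0) Esup.
exists A => F AF; rewrite (big_fset_inclD _ AF) [X in X - _]addrC addrK.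
rewrite -(@ltr_pXn2r _ 2) ?nnegrE ?normr_ge0 ?(ltW e0) //.
rewrite (norm_orthonormal_sum ip_inner w_on) ?fset_uniq //.
have : \sum_(i <- F) a i ^+ 2 <= sup E by apply: sup_upper_bound => //; exists F.
by rewrite (big_fset_inclD _ AF); lra.
Qed.

Section TikhonovNormalEquation.
Variables (R : realType) (X Y : normedModType R).
Variables (ipX : X -> X -> R) (ipY : Y -> Y -> R).
Hypotheses (hX : inner_product ipX) (hY : inner_product ipY).
Variables (B : X -> Y) (alpha : R) (y : Y) (x0 : X).
Hypothesis B_add : {morph B : a b / a + b}.
Hypothesis normal_eq : forall w, ipY (B x0 - y) (B w) + alpha * ipX x0 w = 0.

Lemma tikhonov_expand d : tikhonov B alpha y (x0 + d) =
  tikhonov B alpha y x0 + (2^-1 * `|B d| ^+ 2 + alpha / 2 * `|d| ^+ 2).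
Proof.
have /eqP := normal_eq d; rewrite addr_eq0 => /eqP BdE.
by rewrite /tikhonov B_add addrAC (normD_sqr hY) (normD_sqr hX) BdE; ring.
Qed.

Lemma tikhonov_solution_of_normal_eq : 0 < alpha -> is_tikhonov_solution B alpha y x0.
Proof.
move=> alpha_gt0.
have Bd_ge0 d : 0 <= 2^-1 * `|B d| ^+ 2 by rewrite mulr_ge0 ?invr_ge0 ?sqr_ge0.
have d_ge0 d : 0 <= alpha / 2 * `|d| ^+ 2 by rewrite mulr_ge0 ?divr_ge0 ?sqr_ge0 ?ltW.
split=> [z | z z_min].
  by rewrite -(subrKC x0 z) tikhonov_expand lerDl addr_ge0.
have : alpha / 2 * `|z - x0| ^+ 2 <= 0.
  have := z_min x0; rewrite -{1}(subrKC x0 z) tikhonov_expand.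
  by have := Bd_ge0 (z - x0); lra.
rewrite pmulr_rle0 ?divr_gt0 // => d_le0.
by apply/eqP; rewrite -subr_eq0 -normr_eq0 -sqrf_eq0 eq_le d_le0 sqr_ge0.
Qed.

End TikhonovNormalEquation.

(* For [2 sqrt alpha <= s], beta is a root of [b^2 - s b + alpha], so
   [beta / (beta^2 + alpha) = 1 / s]; otherwise [beta = sqrt alpha] and
   [beta / (beta^2 + alpha) = 1 / (2 sqrt alpha)]. *)
Lemma beta_coef_filterF (R : realType) (alpha s : R) : 0 < alpha -> 0 < s ->
  filterF alpha s / s * (beta_coef alpha s ^+ 2 + alpha) = beta_coef alpha s.
Proof.
move=> alpha_gt0 s_gt0; rewrite /filterF /beta_coef.
have q_gt0 : 0 < Num.sqrt alpha by rewrite sqrtr_gt0.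
have q2 : Num.sqrt alpha ^+ 2 = alpha by rewrite sqr_sqrtr // ltW.
case: ifP => hs; last first.
  by move: q_gt0 q2; set q := Num.sqrt alpha => q_gt0 <-; field; rewrite !gt_eqF.
have disc_ge0 : 0 <= s ^+ 2 / 4 - alpha.
  have : (2 * Num.sqrt alpha) ^+ 2 <= s ^+ 2.
    by rewrite ler_sqr ?nnegrE ?hs ?(ltW s_gt0) // mulr_ge0 ?sqrtr_ge0.
  by rewrite exprMn q2 subr_ge0 ler_pdivlMr //; lra.
have := sqr_sqrtr disc_ge0; set d := Num.sqrt _ => d2.
have -> : (s / 2 + d) ^+ 2 + alpha = s * (s / 2 + d).
  by rewrite sqrrD d2; field.
by field; rewrite gt_eqF.
Qed.

Section FilterBounds.
Variables (R : realType) (alpha : R).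
Hypothesis alpha_gt0 : 0 < alpha.

Let q_gt0 : 0 < 2 * Num.sqrt alpha.
Proof. by rewrite mulr_gt0 ?sqrtr_gt0. Qed.

Lemma filterF_ge0_le1 s : 0 < s -> 0 <= filterF alpha s <= 1.
Proof.
move=> s_gt0; rewrite /filterF; case: ifP => hs; first by rewrite ler01 lexx.
have s_lt : s < 2 * Num.sqrt alpha by rewrite ltNge hs.
by rewrite divr_ge0 ?(ltW s_gt0) ?(ltW q_gt0) //= ler_pdivrMr // mul1r ltW.
Qed.

Lemma filterF_div_le s : 0 < s -> 0 <= filterF alpha s / s <= (2 * Num.sqrt alpha)^-1.
Proof.
move=> s_gt0; rewrite /filterF; case: ifP => hs.
  by rewrite mul1r invr_ge0 ltW //= lef_pV2 ?posrE.
by rewrite mulrAC divff ?gt_eqF // mul1r invr_ge0 ltW //= lexx.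
Qed.

Lemma filterF_residual_le s nu : 0 < s -> 0 <= nu ->
  `|1 - filterF alpha s| * s `^ nu <= (2 * Num.sqrt alpha) `^ nu.
Proof.
move=> s_gt0 nu_ge0; have [s_lt|s_ge] := ltP s (2 * Num.sqrt alpha); last first.
  by rewrite /filterF s_ge subrr normr0 mul0r powR_ge0.
have /andP[F0 F1] := filterF_ge0_le1 s_gt0.
rewrite -[leRHS]mul1r; apply: ler_pM; rewrite ?normr_ge0 ?powR_ge0 //.
  by rewrite ger0_norm ?subr_ge0 //; lra.
by apply: ge0_ler_powR; rewrite ?nnegrE ?(ltW s_gt0) ?(ltW q_gt0) // ltW.
Qed.

End FilterBounds.

Lemma filterF_order_optimal (R : realType) (nu : R) : 0 < nu ->
  exists gamma c1 c2 c3 : R,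
    [/\ 0 < gamma, 0 < c1, 0 < c2, 0 < c3 &
    forall alpha : R, 0 < alpha ->
      [/\ (ereal_sup [set (`|filterF alpha s / s|)%:E | s in [set s : R | (0 < s)%R]]
             <= (c1 * alpha `^ (- gamma))%:E)%E,
          (ereal_sup [set (`|1 - filterF alpha s| * s `^ nu)%:E
                        | s in [set s : R | (0 < s)%R]]
             < (c2 * alpha `^ (gamma * nu))%:E)%E
        & forall s : R, 0 < s -> `|filterF alpha s| <= c3]].
Proof.
move=> nu_gt0; exists 2^-1, 2^-1, (2 * 2 `^ nu), 1; split => // alpha alpha_gt0.
have sqrt_pow : alpha `^ 2^-1 = Num.sqrt alpha by rewrite powR12_sqrt ?ltW.
split.
- apply/ereal_supP => _ [s /= s_gt0 <-]; rewrite lee_fin powRN sqrt_pow -invfM.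
  by have /andP[F0 F1] := filterF_div_le alpha_gt0 s_gt0; rewrite ger0_norm.
- apply: (@le_lt_trans _ _ (2 `^ nu * alpha `^ (2^-1 * nu))%:E).
    apply/ereal_supP => _ [s /= s_gt0 <-]; rewrite lee_fin.
    rewrite powRrM sqrt_pow -powRM ?sqrtr_ge0 //.
    exact: filterF_residual_le (ltW nu_gt0).
  by rewrite lte_fin -mulrA ltr_pMl ?mulr_gt0 ?powR_gt0 // ltr1n.
- move=> s s_gt0; have /andP[F0 F1] := filterF_ge0_le1 alpha_gt0 s_gt0.
  by rewrite ger0_norm.
Qed.

Section SpectralTikhonov.
Variables (R : realType) (X : completeNormedModType R) (Y : normedModType R).
Variables (ipX : X -> X -> R) (ipY : Y -> Y -> R).
Hypotheses (hX : inner_product ipX) (hY : inner_product ipY).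
Variables (I : choiceType) (sigma : I -> R) (u : I -> X) (v : I -> Y).
Hypothesis sigma_gt0 : forall i, 0 < sigma i.
Hypotheses (u_on : Defs.orthonormal ipX u) (v_on : Defs.orthonormal ipY v).
Variables (alpha : R) (B : X -> Y) (y : Y).
Hypothesis alpha_gt0 : 0 < alpha.
Hypothesis B_expand : forall x,
  has_usum (fun i => (beta_coef alpha (sigma i) * ipX (u i) x) *: v i) (B x).

Lemma expansion_additive : {morph B : a b / a + b}.
Proof.
move=> a b; apply: has_usum_unique (B_expand (a + b)) _.
apply: eq_has_usum (has_usumD (B_expand a) (B_expand b)) => i.
by rewrite (ipDr hX) mulrDr scalerDl.
Qed.

Lemma filter_coef_sum_sqr_le r : uniq r ->
  \sum_(i <- r) (filterF alpha (sigma i) / sigma i * ipY y (v i)) ^+ 2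
    <= (2 * Num.sqrt alpha)^-1 ^+ 2 * `|y| ^+ 2.
Proof.
move=> r_uniq; set K := (2 * Num.sqrt alpha)^-1.
apply: (@le_trans _ _ (\sum_(i <- r) K ^+ 2 * ipY y (v i) ^+ 2)).
  apply: ler_sum => i _; rewrite exprMn ler_wpM2r ?sqr_ge0 //.
  have /andP[c_ge0 c_le] := filterF_div_le alpha_gt0 (sigma_gt0 i).
  by rewrite ler_sqr ?nnegrE // (le_trans c_ge0 c_le).
by rewrite -mulr_sumr ler_wpM2l ?sqr_ge0 // (bessel hY v_on).
Qed.

Lemma spectral_normal_eq x0 :
  has_usum (fun i => (filterF alpha (sigma i) / sigma i * ipY y (v i)) *: u i) x0 ->
  forall w, ipY (B x0 - y) (B w) + alpha * ipX x0 w = 0.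
Proof.
move=> x0_expand w.
have x0_coord := orthonormal_coord hX u_on x0_expand.
have Bx0_coord := orthonormal_coord hY v_on (B_expand x0).
rewrite (ipC hX x0) -(ipZl hX).
apply: has_usum_unique (has_usumD (has_usum_ipr hY (B x0 - y) (B_expand w))
                                  (has_usum_ipr hX (alpha *: w) x0_expand)) _.
apply: eq_has_usum (has_usum0 _ _) => i /=.
rewrite (ipZr hY) (ipBl hY) (ipC hY (B x0)) Bx0_coord x0_coord (ipZr hX) (ipZl hX).
have := beta_coef_filterF alpha_gt0 (sigma_gt0 i).
set b := beta_coef _ _; set c := filterF _ _ / _ => bE.
transitivity (ipX w (u i) * ipY y (v i) * (c * (b ^+ 2 + alpha) - b)).
  by rewrite bE subrr mulr0.
by rewrite (ipC hX w); ring.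
Qed.

Lemma spectral_tikhonov_solution : exists x0,
  has_usum (fun i => (filterF alpha (sigma i) / sigma i * ipY y (v i)) *: u i) x0
  /\ is_tikhonov_solution B alpha y x0.
Proof.
have [x0 x0_expand] := orthonormal_has_usum hX u_on filter_coef_sum_sqr_le.
exists x0; split => //.
exact: (tikhonov_solution_of_normal_eq hX hY expansion_additive
          (spectral_normal_eq x0_expand) alpha_gt0).
Qed.

End SpectralTikhonov.

Theorem theorem2 (R : realType)
    (X Y : completeNormedModType R)
    (ipX : X -> X -> R) (ipY : Y -> Y -> R)
    (hX : inner_product ipX) (hY : inner_product ipY)
    (A : {linear X -> Y}) (A_cont : continuous A) (A_cpt : compact_op A)
    (I : choiceType) (sigma : I -> R) (u : I -> X) (v : I -> Y)
    (hsys : singular_system ipX ipY A sigma u v) :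
  (* K_alpha(y) = x(B_alpha, y) = sum_i F_alpha(sigma_i)/sigma_i <y,v_i> u_i *)
  (forall alpha : R, 0 < alpha ->
    forall B : X -> Y,
      (forall x, has_usum (fun i => (beta_coef alpha (sigma i) * ipX (u i) x) *: v i)
                          (B x)) ->
      forall y : Y, exists x0 : X,
        has_usum (fun i => (filterF alpha (sigma i) / sigma i * ipY y (v i)) *: u i) x0
        /\ is_tikhonov_solution B alpha y x0)
  /\
  (* order optimality of the filter F_alpha *)
  (forall nu : R, 0 < nu ->
    exists gamma c1 c2 c3 : R,
      [/\ 0 < gamma, 0 < c1, 0 < c2, 0 < c3 &
      forall alpha : R, 0 < alpha ->
        [/\ (ereal_sup [set (`|filterF alpha s / s|)%:E | s in [set s : R | (0 < s)%R]]
               <= (c1 * alpha `^ (- gamma))%:E)%E,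
            (ereal_sup [set (`|1 - filterF alpha s| * s `^ nu)%:E
                          | s in [set s : R | (0 < s)%R]]
               < (c2 * alpha `^ (gamma * nu))%:E)%E
          & forall s : R, 0 < s -> `|filterF alpha s| <= c3]]).
Proof.
have [sigma_gt0 [u_on v_on] _ _ _] := hsys.
split=> [alpha alpha_gt0 B B_expand y|nu nu_gt0].
  exact: (spectral_tikhonov_solution hX hY sigma_gt0 u_on v_on y alpha_gt0 B_expand).
exact: filterF_order_optimal.
Qed.
About has_usum0.
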